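(* Let $(x_i)_{i\in\mathbf Z}$ be an admissible frontier, embedded in the plane as the lattice path $(P_i)_{i\in\mathbf Z}$. Then there exists a unique $SL_2$-tiling $t:\mathbf Z^2\to\mathbf N$ extending the embedding, i.e. with $t(P_i)=1$ for all $i$. Moreover, for every point $M$ below the frontier, if the word of $M$ is $x_1x_2\cdots x_{n+1}$ (with $n\ge1$, $x_i\in\{x,y\}$), then $$t(M)=(1,1)\,M(x_2)M(x_3)\cdots M(x_n)\begin{pmatrix}1\\1\end{pmatrix},$$ where $M(x)=\begin{pmatrix}1&1\\0&1\end{pmatrix}$, $M(y)=\begin{pmatrix}1&0\\1&1\end{pmatrix}$ (empty product $=$ identity).
   Context: Use Cartesian coordinates on $\mathbf Z^2$ (first coordinate to the right, second upward). An $SL_2$-tiling with values in a commutative ring (or semiring inside a ring) $R$ is a map $t:\mathbf Z^2\to R$ such that for all $(a,b)\in\mathbf Z^2$: $t(a,b+1)\,t(a+1,b)-t(a,b)\,t(a+1,b+1)=1$ (every connected $2\times2$ block, read as displayed in the plane, has determinant $1$). A frontier is a bi-infinite word $(x_i)_{i\in\mathbf Z}$ over $\{x,y\}$; it is admissible if neither $(x_n)_{n\ge0}$ nor $(x_n)_{n\le0}$ is ultimately constant. It is embedded (up to translation) as lattice points $P_i$, $i\in\mathbf Z$, with $P_i-P_{i-1}=(1,0)$ if $x_i=x$ and $(0,1)$ if $x_i=y$. A point $M=(u,v)$ not on the path is below the frontier if some path point $(u,v')$ has $v'>v$. For such $M$, let $L=P_r$ be the path point in row $v$ with largest first coordinate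 ($<u$), and $U=P_s$ the path point in column $u$ with smallest second coordinate ($>v$); then $r<s$ and the word of $M$ is $x_{r+1}x_{r+2}\cdots x_s$ (it begins with $y$ and ends with $x$). *)

From HB Require Import structures.
From mathcomp Require Import all_boot all_order all_algebra.
Set Implicit Arguments. Unset Strict Implicit. Unset Printing Implicit Defensive.
Import Order.TTheory GRing.Theory Num.Theory.
Local Open Scope ring_scope.

(* Letters: true = x (horizontal step), false = y (vertical step). *)
Definition frontier := int -> bool.
Definition point := (int * int)%type.

Definition ult_const_right (w : frontier) : Prop :=
  exists (N : int) (c : bool), forall n : int, N <= n -> w n = c.
Definition ult_const_left (w : frontier) : Prop :=
  exists (N : int) (c : bool), forall n : int, n <= N -> w n = c.
Definition admissible (w : frontier) : Prop :=
  ~ ult_const_right w /\ ~ ult_const_left w.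

Definition step (b : bool) : point := if b then (1, 0) else (0, 1).

Definition embedding (w : frontier) (P : int -> point) : Prop :=
  forall i : int, P i = ((P (i - 1)).1 + (step (w i)).1,
                         (P (i - 1)).2 + (step (w i)).2).

(* SL_2-tiling with values in N: t(a,b+1) t(a+1,b) - t(a,b) t(a+1,b+1) = 1,
   written additively in nat. *)
Definition SL2_tiling (t : point -> nat) : Prop :=
  forall a b : int,
    let p00 := (a, b) in let p01 := (a, b + 1) in
    let p10 := (a + 1, b) in let p11 := (a + 1, b + 1) in
    (t p01 * t p10 = t p00 * t p11 + 1)%N.

Definition below (P : int -> point) (M : point) : Prop :=
  (forall i, P i <> M) /\ exists i, (P i).1 = M.1 /\ M.2 < (P i).2.

Definition is_L (P : int -> point) (M : point) (r : int) : Prop :=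
  (P r).2 = M.2 /\ (P r).1 < M.1 /\
  forall i, (P i).2 = M.2 -> (P i).1 < M.1 -> (P i).1 <= (P r).1.

Definition is_U (P : int -> point) (M : point) (s : int) : Prop :=
  (P s).1 = M.1 /\ M.2 < (P s).2 /\
  forall i, (P i).1 = M.1 -> M.2 < (P i).2 -> (P s).2 <= (P i).2.

(* M(x) = [[1,1],[0,1]], M(y) = [[1,0],[1,1]] *)
Definition Mx (b : bool) : 'M[int]_2 :=
  \matrix_(i < 2, j < 2)
    (if (i == j :> nat) then 1
     else if b then (if ((i == 0%N :> nat) && (j == 1%N :> nat)) then 1 else 0)
     else (if ((i == 1%N :> nat) && (j == 0%N :> nat)) then 1 else 0)).

Definition word_mat (l : seq bool) : 'M[int]_2 :=
  foldr (fun b A => Mx b *m A) 1%:M l.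

(* For the word x_{r+1} ... x_s of M, the inner letters x_{r+2} ... x_{s-1}. *)
Definition inner_word (w : frontier) (r s : int) : seq bool :=
  mkseq (fun k : nat => w (r + 2 + k%:Z)) (absz (s - r - 2)%R).

Definition ones_row : 'rV[int]_2 := \row_(j < 2) 1.
Definition ones_col : 'cV[int]_2 := \col_(i < 2) 1.

Definition word_value (l : seq bool) : int :=
  (ones_row *m word_mat l *m ones_col) ord0 ord0.

(* Walking along the path P, keep the frame F_i = M(x_1) ... M(x_i) in SL_2(Z)
   (extended to negative i by inverses), so that F_i = F_(i-1) M(x_i).  A step
   x does not change the first column of the frame and a step y does not change
   the second one; hence the first column only depends on the row of P_i and
   the second one only on its column.  This gives vectors rho_b (rows) and
   gamma_a (columns), and we set t(a, b) = det(rho_b, gamma_a).  Then t = 1 on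
   the path (det F_i = 1); t satisfies the SL_2 relation by the Plucker
   relation, consecutive rho's and gamma's having determinant 1; t >= 0 since
   det(col_1 F_i, col_2 F_j) is an entry of F_i^-1 F_j or of F_j^-1 F_i, a
   product of nonnegative letter matrices; and if M below the frontier has the word
   y x_(r+2) ... x_(s-1) x, then F_s = F_r M(y) W M(x), so t(M) is the corner
   entry of M(y) W M(x), that is (1,1) W (1,1)^T.  Uniqueness: an N-valued
   SL_2-tiling is positive, so in a unit square one corner is determined by the
   three others; an induction along the path fills the region below it, and
   transposition (exchanging the letters) handles the region above. *)

From Stdlib Require Import Classical FunctionalExtensionality.
From HB Require Import structures.
From mathcomp Require Import all_boot all_order all_algebra ring zify.
Import Order.TTheory GRing.Theory Num.Theory.
Local Open Scope ring_scope.
Set Implicit Arguments. Unset Strict Implicit.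

Lemma mulmx2E m n (A : 'M[int]_(m, 2)) (B : 'M[int]_(2, n)) i j :
  (A *m B) i j = A i 0 * B 0 j + A i 1 * B 1 j.
Proof.
rewrite mxE !big_ord_recl big_ord0 addr0.
by congr (A i _ * B _ j + A i _ * B _ j); apply: val_inj.
Qed.

Lemma col_entry m n (A : 'M[int]_(m, n)) j i k : col j A i k = A i j.
Proof. by rewrite mxE. Qed.

Lemma det2E (A : 'M[int]_2) : \det A = A 0 0 * A 1 1 - A 0 1 * A 1 0.
Proof.
rewrite (expand_det_row _ 0) !big_ord_recl big_ord0 addr0 /cofactor !det_mx11 !mxE /=.
have lift10 : lift (lift (ord0 : 'I_2) ord0) (0 : 'I_1) = 0 by apply: val_inj.
have lift01 : lift (0 : 'I_2) (0 : 'I_1) = 1 by apply: val_inj.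
have ord0E : ord0 = 0 :> 'I_2 by apply: val_inj.
by rewrite lift10 !lift01 ord0E /bump /= expr0 expr1; ring.
Qed.

Lemma Mx_ge0 b i j : 0 <= Mx b i j.
Proof. by rewrite mxE; case: ifP => _ //; case: b; case: ifP. Qed.

Lemma det_Mx b : \det (Mx b) = 1.
Proof. by rewrite det2E !mxE; case: b. Qed.

Lemma Mx_unit b : Mx b \in unitmx.
Proof. by rewrite unitmxE det_Mx unitr1. Qed.

Definition bracket (u v : 'cV[int]_2) : int := u 0 0 * v 1 0 - u 1 0 * v 0 0.

Lemma bracketC u v : bracket u v = - bracket v u.
Proof. by rewrite /bracket; ring. Qed.

(* The three-term Plucker relation; it is the source of the SL_2 relation. *)
Lemma bracket_plucker p q u v :
  bracket p u * bracket q v - bracket q u * bracket p v = bracket p q * bracket u v.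
Proof. by rewrite /bracket; ring. Qed.

Lemma bracket_cols (A : 'M[int]_2) : bracket (col 0 A) (col 1 A) = \det A.
Proof. by rewrite /bracket det2E !col_entry; ring. Qed.

Lemma bracket_col_mulr (A B : 'M[int]_2) :
  bracket (col 0 A) (col 1 (A *m B)) = \det A * B 1 1.
Proof. by rewrite /bracket det2E !col_entry !mulmx2E; ring. Qed.

Lemma bracket_col_mull (A B : 'M[int]_2) :
  bracket (col 0 (A *m B)) (col 1 A) = \det A * B 0 0.
Proof. by rewrite /bracket det2E !col_entry !mulmx2E; ring. Qed.

Lemma col0_mulMx_x (A : 'M[int]_2) : col 0 (A *m Mx true) = col 0 A.
Proof. by apply/matrixP => i j; rewrite !col_entry mulmx2E !mxE /=; ring. Qed.

Lemma col1_mulMx_y (A : 'M[int]_2) : col 1 (A *m Mx false) = col 1 A.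
Proof. by apply/matrixP => i j; rewrite !col_entry mulmx2E !mxE /=; ring. Qed.

Lemma bracket_step_x (A : 'M[int]_2) :
  bracket (col 1 (A *m Mx true)) (col 1 A) = \det A.
Proof. by rewrite /bracket det2E !col_entry !mulmx2E !mxE /=; ring. Qed.

Lemma bracket_step_y (A : 'M[int]_2) :
  bracket (col 0 A) (col 0 (A *m Mx false)) = \det A.
Proof. by rewrite /bracket det2E !col_entry !mulmx2E !mxE /=; ring. Qed.

Lemma word_mat_rcons l b : word_mat (rcons l b) = word_mat l *m Mx b.
Proof.
elim: l => [|c l IHl] /=; first by rewrite mulmx1 mul1mx.
by rewrite IHl mulmxA.
Qed.

Lemma word_mat_ge0 l i j : 0 <= word_mat l i j.
Proof.
elim: l i j => [|b l IHl] i j /=; first by rewrite mxE; case: eqP.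
by rewrite mulmx2E addr_ge0 // mulr_ge0 // Mx_ge0.
Qed.

Lemma sandwich_corner l :
  (Mx false *m word_mat l *m Mx true) 1 1 = word_value l.
Proof. by rewrite /word_value !mulmx2E !mxE /=; ring. Qed.

(* The coordinates of an embedded frontier are of this
   form (c = x for the abscissa, c = y for the ordinate). *)
Definition counts (w : frontier) (c : bool) (f : int -> int) : Prop :=
  forall i, f (i + 1) = f i + (if w (i + 1) == c then 1 else 0).

Lemma int_offset (i j : int) : i <= j -> j = i + (absz (j - i))%:Z.
Proof. lia. Qed.

Lemma counts_negate w c f : counts w c f -> counts (fun k => ~~ w k) (~~ c) f.
Proof. by move=> f_counts i; rewrite f_counts (inj_eq negb_inj). Qed.

Section Counting.

Variables (w : frontier) (c : bool) (f : int -> int).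
Hypothesis f_counts : counts w c f.

Lemma counts_step i : f i <= f (i + 1).
Proof. by rewrite f_counts lerDl; case: ifP. Qed.

Lemma counts_mono i j : i <= j -> f i <= f j.
Proof.
move=> /int_offset ->; elim: (absz _) => [|n IHn]; first by rewrite addr0.
by rewrite -addn1 PoszD addrA (le_trans IHn) ?counts_step.
Qed.

Lemma counts_flat i : f (i + 1) = f i -> w (i + 1) != c.
Proof. by rewrite f_counts; case: eqP => // _; lia. Qed.

Lemma counts_rise i : f i < f (i + 1) -> w (i + 1) = c /\ f (i + 1) = f i + 1.
Proof. by rewrite f_counts; case: eqP => // _; lia. Qed.

Lemma counts_level_const (T : Type) (g : int -> T) :
  (forall k, w (k + 1) != c -> g (k + 1) = g k) ->
  forall i j, f i = f j -> g i = g j.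
Proof.
move=> g_flat.
suff up i (n : nat) : f i = f (i + n%:Z) -> g i = g (i + n%:Z).
  move=> i j; case: (lerP i j) => [/int_offset -> | /ltW /int_offset ->].
    exact: up.
  by move=> /esym /up /esym.
elim: n => [|n IHn]; first by rewrite addr0.
rewrite -addn1 PoszD addrA => eq_f.
have flat : f (i + n%:Z + 1) = f (i + n%:Z).
  apply/eqP; rewrite eq_le counts_step andbT -eq_f counts_mono //; lia.
by rewrite g_flat ?counts_flat // IHn // -flat.
Qed.

Lemma letter_recurs_right : ~ ult_const_right w -> forall N, exists2 n : int, N <= n & w n = c.
Proof.
move=> nconst N; apply: NNPP => none; apply: nconst; exists N, (~~ c) => n le_Nn.
have : w n != c by apply/eqP => wn; apply: none; exists n.
by case: (w n); case: c.
Qed.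

Lemma letter_recurs_left : ~ ult_const_left w -> forall N, exists2 n : int, n <= N & w n = c.
Proof.
move=> nconst N; apply: NNPP => none; apply: nconst; exists N, (~~ c) => n le_nN.
have : w n != c by apply/eqP => wn; apply: none; exists n.
by case: (w n); case: c.
Qed.

Lemma counts_pred i : f i = f (i - 1) + (if w i == c then 1 else 0).
Proof. by rewrite -{1 3}(subrK 1 i) f_counts. Qed.

Lemma counts_at_letter n : w n = c -> f n = f (n - 1) + 1.
Proof. by move=> wn; rewrite counts_pred wn eqxx. Qed.

Lemma counts_unbounded_above : ~ ult_const_right w -> forall a : int, exists k, a < f k.
Proof.
move=> nconst a.
suff [k le_k] : exists k, f 0 + (absz (a - f 0)).+1%:Z <= f k by exists k; lia.
elim: (absz _).+1 => [|m [k le_k]]; first by exists 0; rewrite addr0.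
have [n le_kn wn] := letter_recurs_right nconst (k + 1).
have le_fk : f k <= f (n - 1) by apply: counts_mono; lia.
by exists n; rewrite (counts_at_letter wn); lia.
Qed.

Lemma counts_unbounded_below : ~ ult_const_left w -> forall a : int, exists k, f k <= a.
Proof.
move=> nconst a.
suff [k le_k] : exists k, f k + (absz (f 0 - a))%:Z <= f 0 by exists k; lia.
elim: (absz _) => [|m [k le_k]]; first by exists 0; rewrite addr0.
have [n le_nk wn] := letter_recurs_left nconst k.
exists (n - 1); apply: le_trans le_k.
have := counts_mono le_nk; rewrite counts_at_letter //; lia.
Qed.

Lemma counts_crossing i j a : f i <= a -> a < f j -> exists k, f k = a /\ w (k + 1) = c.
Proof.
move=> le_fi_a lt_a_fj; have le_ij : i <= j.
  by rewrite leNgt; apply/negP => /ltW /counts_mono; lia.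
move: le_fi_a lt_a_fj; rewrite (int_offset le_ij).
move: (absz _) => n; elim: n i {le_ij} => [|n IHn] i le_fi_a; first by rewrite addr0; lia.
rewrite -addn1 PoszD addrA addrAC.
case: (lerP (f (i + 1)) a) => [le_a | lt_a _]; first exact: IHn.
have [wi1 fi1] : w (i + 1) = c /\ f (i + 1) = f i + 1 by apply: counts_rise; lia.
by exists i; split => //; lia.
Qed.

Lemma counts_hit : admissible w -> forall a : int, exists k, f k = a /\ w (k + 1) = c.
Proof.
move=> [nright nleft] a.
have [i le_fi_a] := counts_unbounded_below nleft a.
have [j lt_a_fj] := counts_unbounded_above nright a.
exact: counts_crossing le_fi_a lt_a_fj.
Qed.

End Counting.

Fixpoint frame_nat (w : frontier) (n : nat) : 'M[int]_2 :=
  if n is m.+1 then frame_nat w m *m Mx (w m.+1%:Z) else 1%:M.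

Fixpoint frame_neg (w : frontier) (n : nat) : 'M[int]_2 :=
  if n is m.+1 then frame_neg w m *m invmx (Mx (w (- m%:Z))) else 1%:M.

Definition frame (w : frontier) (i : int) : 'M[int]_2 :=
  match i with Posz n => frame_nat w n | Negz n => frame_neg w n.+1 end.

Section Frames.

Variable w : frontier.

Lemma frame_succ i : frame w (i + 1) = frame w i *m Mx (w (i + 1)).
Proof.
case: i => [n | [|n]].
- by rewrite -PoszD addn1.
- by rewrite /= mul1mx mulVmx // Mx_unit.
- have -> : Negz n.+1 + 1 = Negz n by rewrite !NegzE; lia.
  by rewrite /= NegzE mulmxKV // Mx_unit.
Qed.

Lemma frame_det i : \det (frame w i) = 1.
Proof.
have det_shift k (n : nat) : \det (frame w (k + n%:Z)) = \det (frame w k).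
  elim: n => [|n IHn]; first by rewrite addr0.
  by rewrite intS addrA addrAC frame_succ det_mulmx det_Mx mulr1.
case: (lerP 0 i) => [/int_offset -> | /ltW /int_offset e0].
  by rewrite det_shift /= det1.
by rewrite -(det_shift i (absz (0 - i))) -e0 /= det1.
Qed.

Lemma frame_add i (n : nat) :
  frame w (i + n%:Z) = frame w i *m word_mat (mkseq (fun k => w (i + 1 + k%:Z)) n).
Proof.
elim: n => [|n IHn]; first by rewrite addr0 mulmx1.
rewrite intS addrA addrAC frame_succ IHn mkseqS word_mat_rcons mulmxA.
by rewrite [i + n%:Z + 1]addrAC.
Qed.

Lemma frame_col0_x i : w (i + 1) = true -> col 0 (frame w (i + 1)) = col 0 (frame w i).
Proof. by move=> wi1; rewrite frame_succ wi1 col0_mulMx_x. Qed.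

Lemma frame_col1_y i : w (i + 1) = false -> col 1 (frame w (i + 1)) = col 1 (frame w i).
Proof. by move=> wi1; rewrite frame_succ wi1 col1_mulMx_y. Qed.

Lemma frame_bracket_ge0 i j : 0 <= bracket (col 0 (frame w i)) (col 1 (frame w j)).
Proof.
case: (lerP i j) => [/int_offset -> | /ltW /int_offset ->].
  by rewrite frame_add bracket_col_mulr frame_det mul1r word_mat_ge0.
by rewrite frame_add bracket_col_mull frame_det mul1r word_mat_ge0.
Qed.

Lemma frame_sandwich (r s : int) : r + 2 <= s ->
  frame w s = frame w r *m (Mx (w (r + 1)) *m word_mat (inner_word w r s) *m Mx (w s)).
Proof.
move=> le_r2s; have s_eq : s = r + 1 + (absz (s - r - 2)%R)%:Z + 1 by lia.
rewrite [in LHS]s_eq frame_succ frame_add frame_succ -!mulmxA -s_eq.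
by rewrite /inner_word -(addrA r 1 1).
Qed.

End Frames.

Definition bracket_tiling (rho gamma : int -> 'cV[int]_2) (p : point) : nat :=
  absz (bracket (rho p.2) (gamma p.1)).

Lemma bracket_tiling_SL2 (rho gamma : int -> 'cV[int]_2) :
  (forall b, bracket (rho b) (rho (b + 1)) = 1) ->
  (forall a, bracket (gamma (a + 1)) (gamma a) = 1) ->
  (forall a b, 0 <= bracket (rho b) (gamma a)) ->
  SL2_tiling (bracket_tiling rho gamma).
Proof.
move=> rho_unimod gamma_unimod bracket_ge0 a b /=.
apply/eqP; rewrite -eqz_nat PoszD !PoszM !gez0_abs //=.
have := bracket_plucker (rho (b + 1)) (rho b) (gamma a) (gamma (a + 1)).
rewrite (bracketC (rho (b + 1)) (rho b)) (bracketC (gamma a) (gamma (a + 1))).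
rewrite rho_unimod gamma_unimod mulrNN mulr1.
by move=> plucker; apply/eqP; lia.
Qed.

Lemma SL2_tiling_pos t : SL2_tiling t -> forall p, (0 < t p)%N.
Proof.
move=> t_SL2 [a b]; rewrite lt0n; apply/eqP => t0.
by move: (t_SL2 a (b - 1)) => /=; rewrite subrK t0 mul0n addn1.
Qed.

Lemma SL2_tiling_transpose t : SL2_tiling t -> SL2_tiling (fun p => t (p.2, p.1)).
Proof. by move=> t_SL2 a b /=; rewrite mulnC t_SL2. Qed.

Lemma SL2_tiling_determined t1 t2 a b : SL2_tiling t1 -> SL2_tiling t2 ->
  t1 (a, b) = t2 (a, b) -> t1 (a, b + 1) = t2 (a, b + 1) ->
  t1 (a + 1, b + 1) = t2 (a + 1, b + 1) -> t1 (a + 1, b) = t2 (a + 1, b).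
Proof.
move=> t1_SL2 t2_SL2 e00 e01 e11.
have := t1_SL2 a b; have := t2_SL2 a b => /= rel2; rewrite e00 e01 e11 -rel2.
by move/eqP; rewrite eqn_pmul2l ?SL2_tiling_pos // => /eqP.
Qed.

Section Uniqueness.

Variables (w : frontier) (X Y : int -> int) (t1 t2 : point -> nat).
Hypotheses (X_counts : counts w true X) (Y_counts : counts w false Y).
Hypotheses (t1_SL2 : SL2_tiling t1) (t2_SL2 : SL2_tiling t2).
Hypotheses (t1_path : forall i, t1 (X i, Y i) = 1%N) (t2_path : forall i, t2 (X i, Y i) = 1%N).

(* Below the path, two such tilings agree: induction on the distance between
   the indices of the path points in the row and in the column. *)
Lemma tilings_agree_below (i j : int) : i <= j -> t1 (X j, Y i) = t2 (X j, Y i).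
Proof.
suff agree (n : nat) (k l : int) : k <= l <= k + n%:Z -> t1 (X l, Y k) = t2 (X l, Y k).
  by move=> le_ij; apply: (agree (absz (j - i))); lia.
elim: n k l => [|n IHn] k l bounds.
  by rewrite (_ : l = k) ?t1_path ?t2_path //; lia.
have [-> | ne_lk] := eqVneq l k; first by rewrite t1_path t2_path.
have X_pred := counts_pred X_counts l.
have Y_succ := Y_counts k.
case wl : (w l) X_pred => X_pred.
  case wk1 : (w (k + 1)) Y_succ => Y_succ.
    rewrite -[Y k]addr0 -Y_succ; apply: IHn; lia.
  have ne_k1l : k + 1 != l by apply/eqP => e; move: wk1; rewrite e wl.
  rewrite X_pred; apply: SL2_tiling_determined => //; rewrite -?X_pred -?Y_succ; apply: IHn; lia.
rewrite X_pred addr0; apply: IHn; lia.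
Qed.

End Uniqueness.

(* On both sides of the path: the side above is the side below for the
   transposed tilings and the frontier with exchanged letters. *)
Lemma tilings_agree w (X Y : int -> int) (t1 t2 : point -> nat) :
  counts w true X -> counts w false Y -> SL2_tiling t1 -> SL2_tiling t2 ->
  (forall i, t1 (X i, Y i) = 1%N) -> (forall i, t2 (X i, Y i) = 1%N) ->
  forall i j, t1 (X j, Y i) = t2 (X j, Y i).
Proof.
move=> X_counts Y_counts t1_SL2 t2_SL2 t1_path t2_path i j.
have [le_ij | /ltW le_ji] := lerP i j.
  exact (tilings_agree_below X_counts Y_counts t1_SL2 t2_SL2 t1_path t2_path le_ij).
exact (tilings_agree_below (counts_negate Y_counts) (counts_negate X_counts)
  (SL2_tiling_transpose t1_SL2) (SL2_tiling_transpose t2_SL2) t1_path t2_path le_ji).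
Qed.

Section FrontierTiling.

Variables (w : frontier) (P : int -> point).
Hypotheses (w_adm : admissible w) (P_emb : embedding w P).

Local Notation X i := (P i).1.
Local Notation Y i := (P i).2.

Lemma path_counts_x : counts w true (fun i => X i).
Proof. by move=> i; rewrite {1}(P_emb (i + 1)) addrK /=; case: (w (i + 1)). Qed.

Lemma path_counts_y : counts w false (fun i => Y i).
Proof. by move=> i; rewrite {1}(P_emb (i + 1)) addrK /=; case: (w (i + 1)). Qed.

Lemma column_hit (a : int) : exists j, X j == a.
Proof. by have [j [Xj _]] := counts_hit path_counts_x w_adm a; exists j; apply/eqP. Qed.

Lemma row_hit (b : int) : exists i, Y i == b.
Proof. by have [i [Yi _]] := counts_hit path_counts_y w_adm b; exists i; apply/eqP. Qed.

(* rho_b (resp. gamma_a) is the first (resp. second) column of the frame at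
   some path point of row b (resp. column a); by row_vector_at and
   column_vector_at, it does not depend on the chosen point. *)
Definition row_vector (b : int) : 'cV[int]_2 := col 0 (frame w (xchoose (row_hit b))).
Definition column_vector (a : int) : 'cV[int]_2 := col 1 (frame w (xchoose (column_hit a))).

Lemma row_vector_at i : row_vector (Y i) = col 0 (frame w i).
Proof.
have flat k : w (k + 1) != false -> col 0 (frame w (k + 1)) = col 0 (frame w k).
  by move=> wk1; apply: frame_col0_x; move: wk1; case: (w (k + 1)).
exact: (counts_level_const path_counts_y (g := fun k => col 0 (frame w k)) flat
  (eqP (xchooseP (row_hit (Y i))))).
Qed.

Lemma column_vector_at j : column_vector (X j) = col 1 (frame w j).
Proof.
have flat k : w (k + 1) != true -> col 1 (frame w (k + 1)) = col 1 (frame w k).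
  by move=> wk1; apply: frame_col1_y; move: wk1; case: (w (k + 1)).
exact: (counts_level_const path_counts_x (g := fun k => col 1 (frame w k)) flat
  (eqP (xchooseP (column_hit (X j))))).
Qed.

Lemma row_vector_unimodular b : bracket (row_vector b) (row_vector (b + 1)) = 1.
Proof.
have [k [<- wk1]] := counts_hit path_counts_y w_adm b.
have Yk1 : Y (k + 1) = Y k + 1 by rewrite path_counts_y wk1.
by rewrite -Yk1 !row_vector_at frame_succ wk1 bracket_step_y frame_det.
Qed.

Lemma column_vector_unimodular a : bracket (column_vector (a + 1)) (column_vector a) = 1.
Proof.
have [k [<- wk1]] := counts_hit path_counts_x w_adm a.
have Xk1 : X (k + 1) = X k + 1 by rewrite path_counts_x wk1.
by rewrite -Xk1 !column_vector_at frame_succ wk1 bracket_step_x frame_det.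
Qed.

Lemma row_column_bracket_ge0 a b : 0 <= bracket (row_vector b) (column_vector a).
Proof.
have [i [<- _]] := counts_hit path_counts_y w_adm b.
have [j [<- _]] := counts_hit path_counts_x w_adm a.
by rewrite row_vector_at column_vector_at frame_bracket_ge0.
Qed.

Definition frontier_tiling : point -> nat := bracket_tiling row_vector column_vector.

Lemma frontier_tiling_SL2 : SL2_tiling frontier_tiling.
Proof.
apply: bracket_tiling_SL2.
- exact: row_vector_unimodular.
- exact: column_vector_unimodular.
- exact: row_column_bracket_ge0.
Qed.

Lemma frontier_tiling_at i j :
  (frontier_tiling (X j, Y i))%:Z = bracket (col 0 (frame w i)) (col 1 (frame w j)).
Proof.
rewrite /frontier_tiling /bracket_tiling /= gez0_abs ?row_column_bracket_ge0 //.
by rewrite row_vector_at column_vector_at.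
Qed.

Lemma frontier_tiling_path i : frontier_tiling (P i) = 1%N.
Proof.
apply/eqP; rewrite -eqz_nat [P i]surjective_pairing frontier_tiling_at.
by rewrite bracket_cols frame_det.
Qed.

Lemma frontier_tiling_unique t : SL2_tiling t -> (forall i, t (P i) = 1%N) ->
  t = frontier_tiling.
Proof.
move=> t_SL2 t_path; apply: functional_extensionality => -[a b].
have [i [<- _]] := counts_hit path_counts_y w_adm b.
have [j [<- _]] := counts_hit path_counts_x w_adm a.
apply: (tilings_agree path_counts_x path_counts_y t_SL2 frontier_tiling_SL2) => k.
  by rewrite -surjective_pairing t_path.
by rewrite -surjective_pairing frontier_tiling_path.
Qed.

Lemma word_last_letter M s : below P M -> is_U P M s -> w s = true.
Proof.
move=> [off_path _] [Us_x [Us_y Us_min]]; case ws : (w s) => //; exfalso.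
have Ps := P_emb s; rewrite ws /= addr0 in Ps.
have Xs1 : X (s - 1) = M.1 by rewrite -Us_x Ps.
have Ys : Y s = Y (s - 1) + 1 by rewrite {1}Ps.
have [Ys1_eq | Ys1_gt] : Y (s - 1) = M.2 \/ M.2 < Y (s - 1) by lia.
  by apply: (off_path (s - 1)); rewrite [P _]surjective_pairing Xs1 Ys1_eq -surjective_pairing.
by have := Us_min (s - 1) Xs1 Ys1_gt; lia.
Qed.

Lemma word_first_letter M r : below P M -> is_L P M r -> w (r + 1) = false.
Proof.
move=> [off_path _] [Lr_y [Lr_x Lr_max]]; case wr1 : (w (r + 1)) => //; exfalso.
have Pr1 := P_emb (r + 1); rewrite addrK wr1 /= addr0 in Pr1.
have Yr1 : Y (r + 1) = M.2 by rewrite -Lr_y Pr1.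
have Xr1 : X (r + 1) = X r + 1 by rewrite {1}Pr1.
have [Xr1_eq | Xr1_lt] : X (r + 1) = M.1 \/ X (r + 1) < M.1 by lia.
  by apply: (off_path (r + 1)); rewrite [P _]surjective_pairing Xr1_eq Yr1 -surjective_pairing.
by have := Lr_max (r + 1) Yr1 Xr1_lt; lia.
Qed.

Lemma word_shape M r s : below P M -> is_L P M r -> is_U P M s ->
  [/\ w (r + 1) = false, w s = true & r + 2 <= s].
Proof.
move=> below_M L_r U_s; have wr1 := word_first_letter below_M L_r.
have ws := word_last_letter below_M U_s.
have lt_rs : r < s.
  rewrite ltNge; apply/negP => /(counts_mono path_counts_x).
  by case: L_r U_s => _ [Lr_x _] [Us_x _]; lia.
have ne_r1s : r + 1 != s by apply/eqP => e; move: wr1; rewrite e ws.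
by split => //; lia.
Qed.

Lemma frontier_tiling_word M r s : below P M -> is_L P M r -> is_U P M s ->
  (frontier_tiling M)%:Z = word_value (inner_word w r s).
Proof.
move=> below_M L_r U_s; have [wr1 ws le_r2s] := word_shape below_M L_r U_s.
have -> : M = (X s, Y r) by case: L_r U_s => [Lr_y _] [Us_x _]; rewrite Lr_y Us_x -surjective_pairing.
rewrite frontier_tiling_at (frame_sandwich w le_r2s) wr1 ws.
by rewrite bracket_col_mulr frame_det mul1r sandwich_corner.
Qed.

End FrontierTiling.

Theorem theorem3 (w : frontier) (P : int -> point) :
  admissible w -> embedding w P ->
  exists t : point -> nat,
    [/\ SL2_tiling t,
        (forall i : int, t (P i) = 1%N),
        (forall t' : point -> nat, SL2_tiling t' ->
            (forall i : int, t' (P i) = 1%N) -> t' = t) &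
        (forall (M : point) (r s : int), below P M -> is_L P M r -> is_U P M s ->
            (t M)%:Z = word_value (inner_word w r s))].
Proof.
move=> w_adm P_emb; exists (frontier_tiling w_adm P_emb); split.
- exact: frontier_tiling_SL2.
- exact: frontier_tiling_path.
- exact: frontier_tiling_unique.
- exact: frontier_tiling_word.
Qed.
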